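(* Fix integers $n,L\ge1$ and $s>0$. Consider the $L$-layer linear Transformer acting on $Z_l\in\mathbb{R}^{n\times n}$ by $$Z_{l+1}=Z_l+W^V_l Z_l Z_l^\top (W^Q_l)^\top W^K_l Z_l+W^R_l Z_l,$$ with weights $W^V_l,W^Q_l,W^K_l,W^R_l\in\mathbb{R}^{n\times n}$, and for a graph Laplacian $\mathcal{L}$ let the input be $Z_0^\top=I_{n\times n}-3^{-L}s\mathcal{L}$. Then there exists a choice of the weights such that for every graph on $n$ vertices whose Laplacian $\mathcal{L}$ has largest eigenvalue $\lambda_{\max}$ satisfying $s\lambda_{\max}\le 3^L$, $$\left\|Z_L-\exp(-s\mathcal{L})\right\|_2\le 3^{-L+1}s^2\lambda_{\max}^2 .$$
   Context: A graph has $n$ vertices, $d$ edges and positive edge resistances $r_j$; graphs are connected. With an arbitrary edge orientation, the incidence matrix $B\in\mathbb{R}^{n\times d}$ has $B_{ij}=\mp1/\sqrt{r_j}$ if $e_j$ leaves/enters vertex $i$ and $0$ otherwise, and the Laplacian is $\mathcal{L}=BB^\top$. $\exp(-s\mathcal{L})$ is the matrix exponential and $\|\cdot\|_2$ the spectral norm. *)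

From HB Require Import structures.
From mathcomp Require Import all_boot all_order all_algebra.
From mathcomp Require Import all_classical all_reals all_analysis.
Set Implicit Arguments. Unset Strict Implicit. Unset Printing Implicit Defensive.
Import Order.TTheory GRing.Theory Num.Theory.
Import numFieldNormedType.Exports.
Local Open Scope ring_scope.
Local Open Scope classical_set_scope.

Section Defs.
Variable R : realType.

(* k-th power of a square matrix (defined for every size n, including n = 0) *)
Definition mxpow (n : nat) (A : 'M[R]_n) (k : nat) : 'M[R]_n :=
  iter k (fun M => A *m M) 1%:M.

Definition expm (n : nat) (A : 'M[R]_n) : 'M[R]_n :=
  \matrix_(i, j) limn (fun N : nat => (\sum_(k < N) (k`!%:R)^-1 * mxpow A k i j : R)).

Definition vnorm (n : nat) (v : 'cV[R]_n) : R := Num.sqrt (\sum_i (v i 0) ^+ 2).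

Definition specnorm (n : nat) (A : 'M[R]_n) : R :=
  sup [set vnorm (A *m v) / vnorm v | v in [set v : 'cV[R]_n | v != 0]].

(* A graph on n vertices with d edges, edge j oriented from src j to dst j,
   with resistance r j. Incidence matrix: B i j = -1/sqrt r_j if e_j leaves i,
   +1/sqrt r_j if e_j enters i, 0 otherwise. *)
Definition incidence (n d : nat) (src dst : 'I_d -> 'I_n) (r : 'I_d -> R)
  : 'M[R]_(n, d) :=
  \matrix_(i, j) (if src j == i then - (Num.sqrt (r j))^-1
                  else if dst j == i then (Num.sqrt (r j))^-1 else 0).

Definition laplacian (n d : nat) (src dst : 'I_d -> 'I_n) (r : 'I_d -> R)
  : 'M[R]_n :=
  incidence src dst r *m (incidence src dst r)^T.

Definition adjacent (n d : nat) (src dst : 'I_d -> 'I_n) : rel 'I_n :=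
  fun u v => [exists j, ((src j == u) && (dst j == v)) ||
                        ((src j == v) && (dst j == u))].

Definition connected_graph (n d : nat) (src dst : 'I_d -> 'I_n) : Prop :=
  forall u v : 'I_n, connect (adjacent src dst) u v.

Definition is_graph (n d : nat) (src dst : 'I_d -> 'I_n) (r : 'I_d -> R) : Prop :=
  [/\ forall j, src j != dst j, forall j, 0 < r j & connected_graph src dst].

Definition is_lambda_max (n : nat) (A : 'M[R]_n) (lam : R) : Prop :=
  eigenvalue A lam /\ forall mu, eigenvalue A mu -> mu <= lam.

Definition tf_layer (n : nat) (WV WQ WK WR Z : 'M[R]_n) : 'M[R]_n :=
  Z + WV *m Z *m Z^T *m WQ^T *m WK *m Z + WR *m Z.

Fixpoint tf_run (n : nat) (WV WQ WK WR : nat -> 'M[R]_n) (Z0 : 'M[R]_n) (l : nat)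
  : 'M[R]_n :=
  match l with
  | 0 => Z0
  | l'.+1 => tf_layer (WV l') (WQ l') (WK l') (WR l') (tf_run WV WQ WK WR Z0 l')
  end.

End Defs.

From HB Require Import structures.
From mathcomp Require Import all_boot all_order all_algebra.
From mathcomp Require Import all_classical all_reals all_analysis.
From mathcomp Require Import complex spectral sesquilinear.
From mathcomp Require Import ring lra.
Import Order.TTheory GRing.Theory Num.Theory.
Import numFieldNormedType.Exports.
Set Implicit Arguments.
Unset Strict Implicit.
Unset Printing Implicit Defensive.

(* With W^V = W^Q = W^K = I and W^R = -I a layer maps Z to Z Z^T Z, so from
   the symmetric Z_0 = I - c L (c = 3^-L s) the network computes
   Z_L = (I - c L)^N with N = 3^L.  Diagonalizing the symmetric Laplacian in a
   unitary eigenbasis (over R[i], where the spectral theorem is available)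
   turns Z_L and exp(-s L) into functions of its eigenvalues mu in
   [0, lam_max], so the spectral norm of the difference is at most the maximum
   of |(1 - c mu)^N - exp(-N c mu)|.  Since |a^N - b^N| <= N |a - b| on [0, 1]
   and 0 <= exp(-x) - (1 - x) <= x^2, this is at most
   N (c lam_max)^2 = 3^-L s^2 lam_max^2, a factor 3 below the claimed bound. *)

Local Open Scope complex_scope.
Local Open Scope ring_scope.
Local Open Scope classical_set_scope.

Lemma trmxX (R : comPzRingType) n (A : 'M[R]_n) k : (A ^+ k)^T = A^T ^+ k.
Proof.
elim: k => [|k IH]; first by rewrite !expr0 trmx1.
by rewrite exprS exprSr -IH -!mulmxE trmx_mul.
Qed.

Section Transformer.
Variable R : realType.

Lemma mxpowE n (A : 'M[R]_n) k : mxpow A k = A ^+ k.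
Proof. by elim: k => [|k IH] //=; rewrite /mxpow /= -/(mxpow A k) IH exprS. Qed.

Lemma tf_layer_cube n (Z : 'M[R]_n) :
  tf_layer 1%:M 1%:M 1%:M (- 1%:M) Z = Z *m Z^T *m Z.
Proof.
by rewrite /tf_layer trmx1 !mul1mx !mulmx1 mulNmx mul1mx addrC addKr.
Qed.

Lemma tf_run_cube n (Z : 'M[R]_n) l : Z^T = Z ->
  tf_run (fun=> 1%:M) (fun=> 1%:M) (fun=> 1%:M) (fun=> - 1%:M) Z l
  = Z ^+ (3 ^ l).
Proof.
move=> ZT; elim: l => [|l IH] /=; first by rewrite expr1.
by rewrite tf_layer_cube IH trmxX ZT expnSr exprM !exprS expr0 mulr1 mulrA.
Qed.

End Transformer.

Section UnitaryDiagonal.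
Local Open Scope sesquilinear_scope.
Variables (C : numClosedFieldType) (n : nat) (P : 'M[C]_n).
Hypothesis PU : P \is unitarymx.

Definition udiag (f : 'I_n -> C) : 'M[C]_n := P^t* *m diag_mx (\row_i f i) *m P.

Lemma trCmx_mul_unitary : P^t* *m P = 1%:M.
Proof. by rewrite -invmx_unitary // mulVmx // unitarymx_unit. Qed.

Lemma udiagE f i j : udiag f i j = \sum_k P^t* i k * P k j * f k.
Proof.
by rewrite mxE; apply: eq_bigr => k _; rewrite mul_mx_diag !mxE; ring.
Qed.

Lemma udiag1 : udiag (fun=> 1) = 1%:M.
Proof.
rewrite /udiag -[X in _ *m X *m _](_ : 1%:M = _) ?mulmx1 ?trCmx_mul_unitary //.
by apply/matrixP => i j; rewrite !mxE.
Qed.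

Lemma udiagM f g : udiag f *m udiag g = udiag (fun i => f i * g i).
Proof.
rewrite /udiag !mulmxA -[_ *m P *m P^t*]mulmxA (unitarymxP PU) mulmx1.
rewrite -[_ *m diag_mx _ *m diag_mx _]mulmxA mulmx_diag; congr (_ *m _ *m _).
by apply/matrixP => i j; rewrite !mxE.
Qed.

Lemma udiagB f g : udiag f - udiag g = udiag (fun i => f i - g i).
Proof.
rewrite /udiag -mulmxBl -mulmxBr; congr (_ *m _ *m _).
by apply/matrixP => i j; rewrite !mxE mulrnBl.
Qed.

Lemma udiagZ a f : a *: udiag f = udiag (fun i => a * f i).
Proof.
rewrite /udiag scalemxAl scalemxAr; congr (_ *m _ *m _).
by apply/matrixP => i j; rewrite !mxE mulrnAr.
Qed.

End UnitaryDiagonal.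

Section RealLimits.
Variable R : realType.

Lemma Re_sum I (r : seq I) (F : I -> R[i]) :
  complex.Re (\sum_(i <- r) F i) = \sum_(i <- r) complex.Re (F i).
Proof. exact: (@raddf_sum _ _ (@complex.Re R : Rcomplex R -> R)). Qed.

Lemma Im_sum I (r : seq I) (F : I -> R[i]) :
  complex.Im (\sum_(i <- r) F i) = \sum_(i <- r) complex.Im (F i).
Proof. exact: (@raddf_sum _ _ (@complex.Im R : Rcomplex R -> R)). Qed.

Lemma cvg_sum_ord m (u : 'I_m -> R^nat) (l : 'I_m -> R) :
  (forall k, u k N @[N --> \oo] --> l k) ->
  \sum_k u k N @[N --> \oo] --> \sum_k l k.
Proof. by move=> u_cvg; apply: cvg_big => //; exact: add_continuous. Qed.

Lemma limn_real_lincomb m (a : 'I_m -> R[i]) (u : 'I_m -> R^nat) (l : 'I_m -> R)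
    (v : R^nat) :
  (forall k, u k N @[N --> \oo] --> l k) ->
  (forall N, (v N)%:C = \sum_k a k * (u k N)%:C) ->
  (limn v)%:C = \sum_k a k * (l k)%:C.
Proof.
move=> u_cvg vE.
have ReM (z : R[i]) (x : R) : complex.Re (z * x%:C) = complex.Re z * x.
  by case: z => ? ? /=; rewrite mulr0 subr0.
have ImM (z : R[i]) (x : R) : complex.Im (z * x%:C) = complex.Im z * x.
  by case: z => ? ? /=; rewrite mulr0 add0r.
have ReE : v = fun N => \sum_k complex.Re (a k) * u k N.
  apply: funext => N; rewrite -[v N]/(complex.Re (v N)%:C) vE Re_sum.
  by apply: eq_bigr => k _; rewrite ReM.
have ImE : (fun=> 0) = fun N => \sum_k complex.Im (a k) * u k N.
  apply: funext => N /=; rewrite -[LHS]/(complex.Im (v N)%:C) vE Im_sum.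
  by apply: eq_bigr => k _; rewrite ImM.
have Re_cvg : v @ \oo --> \sum_k complex.Re (a k) * l k.
  by rewrite ReE; apply: cvg_sum_ord => k; apply: cvgM => //; exact: cvg_cst.
have Im_cvg : (fun=> 0 : R) @ \oo --> \sum_k complex.Im (a k) * l k.
  by rewrite ImE; apply: cvg_sum_ord => k; apply: cvgM => //; exact: cvg_cst.
have Im0 : \sum_k complex.Im (a k) * l k = 0.
  by rewrite -(cvg_lim _ Im_cvg) // lim_cst.
rewrite (cvg_lim _ Re_cvg) //; apply/eqP; rewrite eq_complex Re_sum Im_sum /=.
rewrite (eq_bigr _ (fun k _ => ReM _ _)) (eq_bigr _ (fun k _ => ImM _ _)).
by rewrite Im0 !eqxx.
Qed.
End RealLimits.

Section Diagonalizes.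
Variables (R : realType) (n : nat) (P : 'M[R[i]]_n).
Hypothesis PU : P \is unitarymx.

Definition diagonalizes (M : 'M[R]_n) (d : 'I_n -> R) :=
  map_mx (real_complex R) M = udiag P (fun i => (d i)%:C).

Lemma diagonalizes1 : diagonalizes 1%:M (fun=> 1).
Proof. by rewrite /diagonalizes map_mx1 (udiag1 PU). Qed.

Lemma diagonalizesM M N dM dN : diagonalizes M dM -> diagonalizes N dN ->
  diagonalizes (M *m N) (fun i => dM i * dN i).
Proof.
rewrite /diagonalizes map_mxM => -> ->; rewrite (udiagM PU).
by congr udiag; apply: funext => i; rewrite rmorphM.
Qed.

Lemma diagonalizesX M d k :
  diagonalizes M d -> diagonalizes (M ^+ k) (fun i => d i ^+ k).
Proof.
move=> Md; elim: k => [|k IH]; first exact: diagonalizes1.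
have -> : (fun i => d i ^+ k.+1) = (fun i => d i * d i ^+ k).
  by apply: funext => i; rewrite exprS.
by rewrite exprS; apply: diagonalizesM.
Qed.

Lemma diagonalizesB M N dM dN : diagonalizes M dM -> diagonalizes N dN ->
  diagonalizes (M - N) (fun i => dM i - dN i).
Proof.
rewrite /diagonalizes map_mxB => -> ->; rewrite udiagB.
by congr udiag; apply: funext => i; rewrite rmorphB.
Qed.

Lemma diagonalizesZ a M d :
  diagonalizes M d -> diagonalizes (a *: M) (fun i => a * d i).
Proof.
rewrite /diagonalizes map_mxZ => ->; rewrite udiagZ.
by congr udiag; apply: funext => i; rewrite rmorphM.
Qed.

Lemma diagonalizes_expm M d : diagonalizes M d ->
  diagonalizes (expm M) (fun i => expR (d i)).
Proof.
move=> Md; apply/matrixP => i j; rewrite udiagE !mxE.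
apply: (limn_real_lincomb (fun k => is_cvg_series_exp_coeff (d k))) => N.
have powE k :
    (mxpow M k i j)%:C = \sum_m (P^t*)%sesqui i m * P m j * (d m ^+ k)%:C.
  by rewrite mxpowE -udiagE -(diagonalizesX k Md) mxE.
rewrite rmorph_sum; under eq_bigr => k _ do rewrite rmorphM /= powE big_distrr.
rewrite exchange_big; apply: eq_bigr => m _.
rewrite /series /= big_mkord rmorph_sum big_distrr; apply: eq_bigr => k _.
by rewrite /exp_coeff /= !(rmorphM, rmorphXn, fmorphV); ring.
Qed.

End Diagonalizes.

Lemma eigenvalue_conj_diag (F : fieldType) n (P : 'M[F]_n) (d : 'rV[F]_n) i :
  P \in unitmx -> eigenvalue (invmx P *m diag_mx d *m P) (d 0 i).
Proof.
move=> Pu; apply/eigenvalueP; exists (row i P).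
  rewrite -row_mul !mulmxA mulmxV // mul1mx row_mul row_diag_mx.
  by rewrite -scalemxAl -rowE.
rewrite rowE mulmx_free_eq0 ?row_free_unit //.
apply/eqP => /matrixP /(_ 0 i).
by rewrite !mxE !eqxx /= => /eqP; rewrite oner_eq0.
Qed.

Lemma symmetric_diagonalizable (R : realType) n (M : 'M[R]_n) : M^T = M ->
  exists2 P : 'M[R[i]]_n, P \is unitarymx &
    exists d, diagonalizes P M d /\ forall i, eigenvalue M (d i).
Proof.
move=> MT; set Mc := map_mx (real_complex R) M.
have Mherm : Mc \is hermsymmx.
  apply: realsym_hermsym.
    apply/is_hermitianmxP.
    by rewrite expr0 scale1r map_mx_id // /Mc map_trmx MT.
  by apply/mxOverP => i j; rewrite mxE; apply/complex_realP; exists (M i j).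
have /orthomx_spectralP Mdec := hermitian_normalmx Mherm.
have sp_real := hermitian_spectral_diag_real Mherm.
set P := spectralmx Mc in Mdec; set sp := spectral_diag Mc in Mdec sp_real.
have PU : P \is unitarymx by exact: spectral_unitarymx.
have spE i : (complex.Re (sp 0 i))%:C = sp 0 i.
  by apply: RRe_real; apply: (mxOverP sp_real).
exists P => //; exists (fun i => complex.Re (sp 0 i)); split => [|i].
  rewrite /diagonalizes -/Mc Mdec invmx_unitary // /udiag; congr (_ *m _ *m _).
  by apply/matrixP => i j; rewrite !mxE spE.
rewrite -(eigenvalue_map (real_complex R)) /= spE -/Mc Mdec.
exact/eigenvalue_conj_diag/spectral_unit.
Qed.

Lemma sum_sqr_gt0 (R : realDomainType) (I : finType) (f : I -> R) i :
  f i != 0 -> 0 < \sum_j f j ^+ 2.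
Proof.
move=> fi; rewrite (bigD1 i) //= ltr_pwDl //.
  by rewrite lt_def sqrf_eq0 fi sqr_ge0.
by apply: sumr_ge0 => j _; exact: sqr_ge0.
Qed.

Section SpectralNorm.
Local Open Scope sesquilinear_scope.
Variable R : realType.

Lemma vnorm_gt0 n (v : 'cV[R]_n) : v != 0 -> 0 < vnorm v.
Proof.
case/matrix0Pn => i [j]; rewrite (ord1 j) => vi.
by rewrite sqrtr_gt0 (sum_sqr_gt0 (f := fun k => v k 0) vi).
Qed.

Lemma specnorm_le n (M : 'M[R]_n.+1) b :
  (forall v, vnorm (M *m v) <= b * vnorm v) -> specnorm M <= b.
Proof.
move=> Mb; apply: ge_sup.
  exists (vnorm (M *m const_mx 1) / vnorm (const_mx 1 : 'cV[R]_n.+1)).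
  exists (const_mx 1) => //=.
  by apply/matrix0Pn; exists 0, 0; rewrite mxE oner_eq0.
by move=> _ [v /= v0 <-]; rewrite ler_pdivrMr ?vnorm_gt0.
Qed.

Lemma conjC_real_complex (x : R) : (x%:C)^* = x%:C.
Proof. by apply/conj_Creal/complex_realP; exists x. Qed.

Definition csqnorm n (w : 'cV[R[i]]_n) : R[i] := (w^t* *m w) 0 0.

Lemma csqnormE n (w : 'cV[R[i]]_n) : csqnorm w = \sum_i w i 0 * (w i 0)^*.
Proof. by rewrite /csqnorm mxE; apply: eq_bigr => i _; rewrite !mxE mulrC. Qed.

Lemma csqnorm_unitary n (Q : 'M[R[i]]_n) w :
  Q^t* *m Q = 1%:M -> csqnorm (Q *m w) = csqnorm w.
Proof.
move=> QQ; rewrite /csqnorm trmx_mul map_mxM mulmxA.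
by rewrite -[_ *m Q^t* *m Q]mulmxA QQ mulmx1.
Qed.

Lemma csqnorm_real n (v : 'cV[R]_n) :
  csqnorm (map_mx (real_complex R) v) = (vnorm v ^+ 2)%:C.
Proof.
rewrite csqnormE /vnorm sqr_sqrtr ?sumr_ge0 // => [|i _]; last exact: sqr_ge0.
rewrite rmorph_sum; apply: eq_bigr => i _.
by rewrite !mxE rmorphXn expr2 conjC_real_complex.
Qed.

Lemma csqnorm_diag_le n (g : 'I_n -> R) (w : 'cV[R[i]]_n) b :
  (forall i, `|g i| <= b) ->
  csqnorm (diag_mx (\row_i (g i)%:C) *m w) <= (b ^+ 2)%:C * csqnorm w.
Proof.
move=> gb; rewrite !csqnormE mulr_sumr; apply: ler_sum => i _.
rewrite mul_diag_mx !mxE rmorphM /= conjC_real_complex.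
have -> : (g i)%:C * w i 0 * ((g i)%:C * (w i 0)^*)
          = (g i ^+ 2)%:C * (w i 0 * (w i 0)^*).
  by rewrite rmorphXn; ring.
rewrite ler_wpM2r ?mul_conjC_ge0 // lecR.
by rewrite -real_normK ?num_real // lerXn2r ?nnegrE ?(le_trans _ (gb i)).
Qed.

Lemma vnorm_diagonalizes_le n (P : 'M[R[i]]_n) (M : 'M[R]_n) g b :
  P \is unitarymx -> diagonalizes P M g -> 0 <= b -> (forall i, `|g i| <= b) ->
  forall v, vnorm (M *m v) <= b * vnorm v.
Proof.
move=> PU Mg b0 gb v.
rewrite -(ler_pXn2r (n := 2)) ?nnegrE ?mulr_ge0 ?sqrtr_ge0 // exprMn -lecR.
rewrite -csqnorm_real rmorphM /= -csqnorm_real map_mxM Mg /udiag -!mulmxA.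
rewrite csqnorm_unitary; last by rewrite trmxCK (unitarymxP PU).
apply: le_trans (csqnorm_diag_le _ gb) _.
by rewrite csqnorm_unitary ?trCmx_mul_unitary.
Qed.

End SpectralNorm.

Lemma mul_row_trmx (R : pzSemiRingType) n (u : 'rV[R]_n) :
  (u *m u^T) 0 0 = \sum_i u 0 i ^+ 2.
Proof. by rewrite mxE; apply: eq_bigr => i _; rewrite mxE expr2. Qed.

Lemma eigenvalue_gram_ge0 (R : realFieldType) m n (B : 'M[R]_(m, n)) a :
  eigenvalue (B *m B^T) a -> 0 <= a.
Proof.
case/eigenvalueP => v vE /matrix0Pn [i [j]]; rewrite (ord1 i) => vj.
have quadE : \sum_k (v *m B) 0 k ^+ 2 = a * \sum_k v 0 k ^+ 2.
  by rewrite -!mul_row_trmx trmx_mul !mulmxA -(mulmxA v) vE -scalemxAl mxE.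
rewrite -(pmulr_lge0 _ (sum_sqr_gt0 vj)) -quadE.
by apply: sumr_ge0 => k _; exact: sqr_ge0.
Qed.

Section EulerApproximation.
Variable R : realType.

Lemma normB_exprn_le (a e : R) k : 0 <= a <= 1 -> 0 <= e <= 1 ->
  `|a ^+ k - e ^+ k| <= k%:R * `|a - e|.
Proof.
move=> /andP[a0 a1] /andP[e0 e1]; elim: k => [|k IH].
  by rewrite !expr0 subrr normr0 mul0r.
have -> : a ^+ k.+1 - e ^+ k.+1 = a * (a ^+ k - e ^+ k) + e ^+ k * (a - e).
  by rewrite !exprS; ring.
apply: (le_trans (ler_normD _ _)); rewrite !normrM -addn1 natrD mulrDl mul1r.
apply: lerD.
  by rewrite (ger0_norm a0); apply: le_trans IH; rewrite ler_piMl.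
by rewrite ger0_norm ?exprn_ge0 // ler_piMl ?exprn_ile1.
Qed.

Lemma normB_1sub_expRN_le (x : R) : 0 <= x -> `|(1 - x) - expR (- x)| <= x ^+ 2.
Proof.
move=> x0.
have lb : 1 - x <= expR (- x) by apply: expR_ge1Dx.
have inv_ub : expR (- x) <= (1 + x)^-1.
  by rewrite expRN lef_pV2 ?posrE ?expR_gt0 ?expR_ge1Dx //; lra.
have ub : (1 + x)^-1 <= 1 - x + x ^+ 2.
  by rewrite -[(1 + x)^-1]mul1r ler_pdivrMr; [nra | lra].
rewrite ler0_norm ?subr_le0 //; lra.
Qed.

Lemma euler_approx N (x : R) : 0 <= x <= 1 ->
  `|(1 - x) ^+ N - expR (- (N%:R * x))| <= N%:R * x ^+ 2.
Proof.
move=> /andP[x0 x1]; rewrite -mulrN expRM_natl.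
apply: le_trans (normB_exprn_le _ _ _) _.
- by apply/andP; split; lra.
- by rewrite expR_ge0 expR_le1; lra.
- by rewrite ler_wpM2l ?normB_1sub_expRN_le.
Qed.

Lemma euler_approx_le N (c mu lam : R) :
  0 <= c -> 0 <= mu <= lam -> c * lam <= 1 ->
  `|(1 - c * mu) ^+ N - expR (- (N%:R * c) * mu)| <= N%:R * (c * lam) ^+ 2.
Proof.
move=> c0 /andP[mu0 mu_le] clam.
have cmu_le : c * mu <= c * lam by rewrite ler_wpM2l.
rewrite mulNr -mulrA; apply: le_trans (euler_approx N _) _.
  by rewrite mulr_ge0 //= (le_trans cmu_le).
by rewrite ler_wpM2l // ler_sqr ?nnegrE ?(mulr_ge0 c0) // (le_trans mu0).
Qed.

End EulerApproximation.

Theorem lemma5 (R : realType) (n L : nat) (s : R) :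
  (1 <= n)%N -> (1 <= L)%N -> 0 < s ->
  exists WV WQ WK WR : nat -> 'M[R]_n,
    forall (d : nat) (src dst : 'I_d -> 'I_n) (r : 'I_d -> R) (lam : R),
      is_graph src dst r ->
      is_lambda_max (laplacian src dst r) lam ->
      s * lam <= 3 ^+ L ->
      let Lap := laplacian src dst r in
      let Z0 := (1%:M - ((3 ^+ L)^-1 * s) *: Lap)^T in
      specnorm (tf_run WV WQ WK WR Z0 L - expm (- s *: Lap))
        <= (3 ^+ L)^-1 * 3 * s ^+ 2 * lam ^+ 2.
Proof.
case: n => // n _ _ s_gt0.
exists (fun=> 1%:M), (fun=> 1%:M), (fun=> 1%:M), (fun=> - 1%:M).
move=> d src dst r lam _ [_ lam_max] slam /=.
set Lap := laplacian src dst r; set N := (3 ^ L)%N; set c := (3 ^+ L)^-1 * s.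
have NE : 3 ^+ L = N%:R :> R by rewrite natrX.
have N_gt0 : 0 < N%:R :> R by rewrite ltr0n expn_gt0.
have c_ge0 : 0 <= c by rewrite /c NE mulr_ge0 ?invr_ge0 ?ltW.
have clam : c * lam <= 1 by rewrite /c NE -mulrA mulrC ler_pdivrMr ?mul1r -?NE.
have LapT : Lap^T = Lap by rewrite trmx_mul trmxK.
have [P PU [ev [LapP ev_eig]]] := symmetric_diagonalizable LapT.
have ev_bound i : 0 <= ev i <= lam.
  by rewrite (eigenvalue_gram_ge0 (ev_eig i)) lam_max.
have Z0T : (1%:M - c *: Lap)^T = 1%:M - c *: Lap.
  by rewrite linearB linearZ /= trmx1 LapT.
have -> : (3 ^+ L)^-1 * 3 * s ^+ 2 * lam ^+ 2 = 3 * (N%:R * (c * lam) ^+ 2).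
  by rewrite /c NE; field; rewrite gt_eqF.
rewrite (_ : - s = - (N%:R * c)); last by rewrite /c NE mulVKf ?gt_eqF.
rewrite Z0T tf_run_cube //; apply: specnorm_le.
apply: (vnorm_diagonalizes_le PU
  (g := fun i => (1 - c * ev i) ^+ N - expR (- (N%:R * c) * ev i))).
- apply: diagonalizesB; last exact/(diagonalizes_expm PU)/diagonalizesZ.
  apply/(diagonalizesX PU)/diagonalizesB; last exact: diagonalizesZ.
  exact: diagonalizes1.
- by apply: mulr_ge0 => //; apply: mulr_ge0; [exact: ler0n | exact: sqr_ge0].
move=> i; apply: le_trans (euler_approx_le N c_ge0 (ev_bound i) clam) _.
by apply: ler_peMl; [rewrite mulr_ge0 ?sqr_ge0 | rewrite ler1n].
Qed.
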